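(* Let $X=\prod_{i\in I}X_i$ be a topological product and suppose that a subspace $Y$ of $X$ fills all finite subproducts of $X$. If $Y$ is a $T_3$-space, then each factor $X_i$ is also a $T_3$-space.
   Context: For nonempty $J\subseteq I$, $\pi_J\colon X\to X_J=\prod_{i\in J}X_i$ is the projection. A set $Y\subseteq X$ fills finite subproducts of $X$ if $\pi_J(Y)=X_J$ for every finite nonempty $J\subseteq I$. A space is $T_3$ if every open neighborhood $U$ of a point $x$ contains an open neighborhood $V$ of $x$ with $\overline{V}\subseteq U$ (no $T_1$ assumed). *)

From HB Require Import structures.
From mathcomp Require Import all_boot all_order all_algebra.
From mathcomp Require Import all_classical all_reals all_analysis.
Set Implicit Arguments. Unset Strict Implicit. Unset Printing Implicit Defensive.
Local Open Scope classical_set_scope.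

(* T3 as in the paper (no T1 assumed): every open neighbourhood U of x
   contains an open neighbourhood V of x with closure V included in U. *)
Definition T3_space (T : topologicalType) : Prop :=
  forall (x : T) (U : set T), open U -> U x ->
    exists V : set T, [/\ open V, V x & closure V `<=` U].

Definition proj_sub {I : Type} (X : I -> Type) (J : set I)
  (x : forall i, X i) : forall j : {i : I | J i}, X (proj1_sig j) :=
  fun j => x (proj1_sig j).

Definition fills_finite_subproducts {I : Type} (X : I -> Type)
  (Y : set (forall i, X i)) : Prop :=
  forall J : set I, finite_set J -> J !=set0 -> @proj_sub I X J @` Y = setT.

From HB Require Import structures.
From mathcomp Require Import all_boot all_order all_algebra.
From mathcomp Require Import all_classical all_reals all_analysis.
Set Implicit Arguments. Unset Strict Implicit. Unset Printing Implicit Defensive.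
Local Open Scope classical_set_scope.

(* Given x in an open U ⊆ X_i, take y ∈ Y with y_i = x.  Regularity of Y
   yields V open in Y with cl_Y V ⊆ Y ∩ π_i⁻¹(U), and V ⊇ Y ∩ B for an open
   box B around y depending only on a finite set J of coordinates.  The slice
   of B through y at coordinate i is an open neighbourhood of x.  For z in its
   closure, filling the subproduct over J ∪ {i} gives w ∈ Y agreeing with y on
   J ∖ {i} and with w_i = z; since Y is dense in X, every neighbourhood of w
   in Y meets B, so w ∈ cl_Y V and z = w_i ∈ U. *)

Section agreement.
Variables (I : Type) (X : I -> Type).

Definition agree_on (J : set I) (p q : forall i, X i) := forall j, J j -> p j = q j.

Definition cylindrical (J : set I) (O : set (forall i, X i)) :=
  forall p q, agree_on J p q -> O p -> O q.

Lemma cylindricalI J K (O P : set (forall i, X i)) :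
  cylindrical J O -> cylindrical K P -> cylindrical (J `|` K) (O `&` P).
Proof.
move=> cO cP p q pq [Op Pp]; split; [apply: cO Op | apply: cP Pp] => j Jj.
  by apply: pq; left.
by apply: pq; right.
Qed.

Variables (Y : set (forall i, X i)).
Hypothesis fillY : fills_finite_subproducts Y.

Lemma fills_proj_surjective i : proj i @` Y = setT.
Proof.
apply/seteqP; split => // a _.
pose g (j : {k | [set i] k}) : X (sval j) := ecast k (X k) (esym (proj2_sig j)) a.
have [y Yy ygi] : (@proj_sub I X [set i] @` Y) g by rewrite fillY //; exists i.
by exists y => //; exact (congr1 (fun f => f (exist _ i erefl)) ygi).
Qed.

Lemma fills_agree_on J g : Y !=set0 -> finite_set J ->
  exists2 y, Y y & agree_on J g y.
Proof.
move=> [y0 Yy0] finJ; have [[j0 Jj0]|J0] := pselect (J !=set0); last first.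
  by exists y0 => // j Jj; case: J0; exists j.
have [y Yy ygJ] : (@proj_sub I X J @` Y) (@proj_sub I X J g).
  by rewrite fillY //; exists j0.
by exists y => // j Jj; exact (congr1 (fun f => f (exist _ j Jj)) (esym ygJ)).
Qed.

End agreement.

Section product_cylinders.
Variables (I : eqType) (X : I -> topologicalType).
Implicit Types (p q : prod_topology X) (B : set (prod_topology X)) (J : set I).

Definition cylinder_nbhs p : set_system (prod_topology X) :=
  [set N | exists J B,
     [/\ finite_set J, open B, B p, cylindrical J B & B `<=` N]].

Lemma cylinder_nbhs_filter p : Filter (cylinder_nbhs p).
Proof.
constructor.
- by exists set0, setT; split => //; exact: openT.
- move=> N1 N2 [J1 [B1 [fJ1 oB1 B1p cB1 B1N]]] [J2 [B2 [fJ2 oB2 B2p cB2 B2N]]].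
  exists (J1 `|` J2), (B1 `&` B2); split.
  + by rewrite finite_setU.
  + exact: openI.
  + by [].
  + exact: cylindricalI.
  + by move=> q [/B1N ? /B2N ?].
- by move=> N N' NN' [J [B [fJ oB Bp cB BN]]]; exists J, B; split => // q /BN/NN'.
Qed.

Lemma nbhs_cylinder_nbhs p : nbhs p `<=` cylinder_nbhs p.
Proof.
apply: (@cvg_sup _ _ _ (cylinder_nbhs p) p (cylinder_nbhs_filter p)).2 => i A.
rewrite nbhsE => -[_ [[C oC <-] Cp] CA].
exists [set i], (proj i @^-1` C); split.
- exact: finite_set1.
- by apply: (@open_comp (prod_topology X)) oC => q _; exact: proj_continuous.
- by [].
- by move=> q q' qq' /=; rewrite /proj -qq'.
- by [].
Qed.

Lemma fills_dense (Y : set (prod_topology X)) :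
  fills_finite_subproducts Y -> Y !=set0 -> dense Y.
Proof.
move=> fillY Y0 A [p Ap] oA.
have [J [B [fJ _ Bp cB BA]]] := nbhs_cylinder_nbhs (open_nbhs_nbhs (conj oA Ap)).
have [y Yy py] := fills_agree_on fillY p Y0 fJ.
by exists y; split => //; apply/BA/(cB p).
Qed.

Lemma dfwith_proj p i : dfwith p i (p i) = p.
Proof. by apply: functional_extensionality_dep => j; case: dfwithP. Qed.

Lemma agree_on_dfwith J p q i (a b : X i) :
  agree_on J (dfwith p i b) q -> agree_on J (dfwith p i a) (dfwith q i a).
Proof.
move=> pbq j Jj; have := pbq j Jj.
by case: (eqVneq i j) => [<-|ij]; rewrite ?dfwithin // !dfwithout.
Qed.

End product_cylinders.

Section filling_subspace.
Variables (I : eqType) (X : I -> topologicalType).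
Variables (Y : set (prod_topology X)) (i : I).
Hypothesis fillY : fills_finite_subproducts Y.
Implicit Types (y : prod_topology X) (B : set (prod_topology X)) (J : set I).

Lemma closure_slice_sub_proj y J B : finite_set J -> open B -> cylindrical J B ->
  closure (dfwith y i @^-1` B) `<=`
  proj i @` (Y `&` @closure (subspace Y) (Y `&` B)).
Proof.
move=> fJ oB cB z clz.
have [y0 Yy0 _] : (proj i @` Y) z by rewrite fills_proj_surjective.
have Y0 : Y !=set0 by exists y0.
have fJi : finite_set (J `|` [set i]).
  by rewrite finite_setU; split => //; exact: finite_set1.
have [w Yw yzw] := fills_agree_on fillY (dfwith y i z) Y0 fJi.
have wi : w i = z by rewrite -yzw ?dfwithin //; right.
exists w => //; split => // C.
move=> NC; have {}NC : within Y (nbhs (w : prod_topology X)) C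
  by rewrite nbhs_subspace_in.
have /clz [a [Ba Na]] : nbhs z (dfwith w i @^-1` [set q | Y q -> C q]°).
  apply: dfwith_continuous; rewrite /= -wi dfwith_proj.
  exact: (@nbhs_interior (prod_topology X)).
have Bwa : B (dfwith w i a).
  by apply: cB Ba; apply: agree_on_dfwith => j Jj; apply: yzw; left.
have [t [[Bt /interior_subset Ct] Yt]] :=
  fills_dense fillY Y0 (ex_intro _ _ (conj Bwa Na)) (openI oB (@open_interior _ _)).
by exists t; split; [split | apply: Ct].
Qed.

Lemma fills_T3_factor : T3_space (subspace Y) -> T3_space (X i).
Proof.
move=> T3Y x U oU Ux.
have [y Yy yx] : (proj i @` Y) x by rewrite fills_proj_surjective.
pose W : set (subspace Y) := Y `&` proj i @^-1` U.
have oW : open W.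
  rewrite /W setIC open_subspaceIT; apply: open_subspaceW.
  by apply: (@open_comp (prod_topology X)) oU => q _; exact: proj_continuous.
have Wy : W y by split => //; rewrite /= yx.
have [V [oV Vy clVW]] := T3Y y W oW Wy.
have : within Y (nbhs (y : prod_topology X)) V.
  by rewrite nbhs_subspace_in //; exact: open_nbhs_nbhs.
move=> /nbhs_cylinder_nbhs [J [B [fJ oB By cB BV]]].
exists (dfwith y i @^-1` B); split.
- by apply: (@open_comp _ (prod_topology X)) oB => a _; exact: dfwith_continuous.
- by rewrite /= -yx dfwith_proj.
- move=> z /(closure_slice_sub_proj fJ oB cB) [w [Yw clw] <-].
  have /clVW [] // : closure V w.
  by apply: closureS clw => q [Yq /BV]; apply.
Qed.

End filling_subspace.

Theorem proposition3p2 (I : Type) (X : I -> topologicalType)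
  (Y : set (prod_topology X)) :
  @fills_finite_subproducts I (fun i => X i) Y ->
  T3_space (subspace Y) ->
  forall i : I, T3_space (X i).
Proof.
move=> fillY T3Y i.
(* [dfwith] needs decidable equality on the index type, classically available. *)
exact: (@fills_T3_factor {classic I} X Y i fillY T3Y).
Qed.
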